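(* Let $(C,\mathfrak p,\mathfrak d)$ be a regular $q$-magma coalgebra. Then $(C,\mathfrak p,\mathfrak d)$ is a $q$-cycle coalgebra if and only if for all $i,j,k\in\{0,\dots,n-1\}$: $$\sum_{a+b=j}\sum_{h=0}^i\sum_{l=0}^k\mathfrak p_{ia}^h\mathfrak d_{kb}^l\mathfrak p_{hl}^1=\sum_{c+d=k}\sum_{h=0}^i\sum_{l=0}^j\mathfrak p_{ic}^h\mathfrak p_{jd}^l\mathfrak p_{hl}^1,$$ $$\sum_{a+b=j}\sum_{h=0}^i\sum_{l=0}^k\mathfrak p_{ia}^h\mathfrak p_{kb}^l\mathfrak d_{hl}^1=\sum_{c+d=k}\sum_{h=0}^i\sum_{l=0}^j\mathfrak d_{ic}^h\mathfrak d_{jd}^l\mathfrak p_{hl}^1,$$ $$\sum_{a+b=j}\sum_{h=0}^i\sum_{l=0}^k\mathfrak d_{ia}^h\mathfrak p_{kb}^l\mathfrak d_{hl}^1=\sum_{c+d=k}\sum_{h=0}^i\sum_{l=0}^j\mathfrak d_{ic}^h\mathfrak d_{jd}^l\mathfrak d_{hl}^1.$$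
   Context: $K$ is an algebraically closed field of characteristic $0$ and $n\ge2$. $C$ is the coalgebra dual to $K[y]/\langle y^n\rangle$: basis $x_0,\dots,x_{n-1}$, $\Delta(x_i)=\sum_{j+k=i}x_j\otimes x_k$, $\epsilon(x_i)=\delta_{i0}$; $C\otimes C$ has the tensor product coalgebra structure; Sweedler notation $\Delta(b)=b_{(1)}\otimes b_{(2)}$. For linear maps $\mathfrak p,\mathfrak d\colon C\otimes C\to C$ write $a\cdot b=\mathfrak p(a\otimes b)$, $a:b=\mathfrak d(a\otimes b)$, $\mathfrak p(x_i\otimes x_j)=\sum_{k=0}^{n-1}\mathfrak p_{ij}^kx_k$, $\mathfrak d(x_i\otimes x_j)=\sum_{k=0}^{n-1}\mathfrak d_{ij}^kx_k$, with the convention $\mathfrak p_{ij}^k=\mathfrak d_{ij}^k=0$ if $k\ge n$, $i<0$ or $j<0$; sums over $a+b=j$, $c+d=k$ range over nonnegative integers. A triple $(C,\mathfrak p,\mathfrak d)$ with $\mathfrak p,\mathfrak d$ coalgebra morphisms is a regular $q$-magma coalgebra if there are coalgebra morphisms $a\otimes b\mapsto a^b$, $a\otimes b\mapsto a_b$ from $C\otimes C$ to $C$ with $a^{b_{(1)}}\cdot b_{(2)}=(a\cdot b_{(1)})^{b_{(2)}}=\epsilon(b)a$ and $(a:b_{(2)})_{b_{(1)}}=a_{b_{(2)}}:b_{(1)}=\epsilon(b)a$. It is a ($q$-cycle, i.e. regular) $q$-cycle coalgebra if moreover for all $a,b,c\in C$: (1) $(a\cdot b_{(1)})\cdot(c:b_{(2)})=(a\cdot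 c_{(2)})\cdot(b\cdot c_{(1)})$; (2) $(a\cdot b_{(1)}):(c\cdot b_{(2)})=(a:c_{(2)})\cdot(b:c_{(1)})$; (3) $(a:b_{(1)}):(c:b_{(2)})=(a:c_{(2)}):(b\cdot c_{(1)})$. *)

From HB Require Import structures.
From mathcomp Require Import all_boot all_order all_algebra.
Set Implicit Arguments. Unset Strict Implicit. Unset Printing Implicit Defensive.
Import GRing.Theory.
Local Open Scope ring_scope.

(* C = dual coalgebra of K[y]/(y^n), basis x_0..x_(n-1).
   An element of C is its coordinate vector 'I_n -> K.
   A linear map C (x) C -> C is given by its structure constants
   p : 'I_n -> 'I_n -> 'I_n -> K, i.e. p(x_i (x) x_j) = sum_k p i j k x_k. *)

Section QCycle.
Variables (K : fieldType) (n : nat).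

Definition lmap2 := 'I_n -> 'I_n -> 'I_n -> K.
Definition vecC := 'I_n -> K.

(* structure constants with the convention: 0 when an index is out of range *)
Definition cf (p : lmap2) (i j k : nat) : K :=
  match @insub _ (fun m => m < n)%N 'I_n i,
        @insub _ (fun m => m < n)%N 'I_n j,
        @insub _ (fun m => m < n)%N 'I_n k with
  | Some i', Some j', Some k' => p i' j' k'
  | _, _, _ => 0
  end.

(* basis vector x_i (zero if i >= n) *)
Definition xb (i : nat) : vecC := fun k => ((k : nat) == i)%:R.

Definition app (p : lmap2) (a b : vecC) : vecC :=
  fun k => \sum_(i < n) \sum_(j < n) a i * b j * p i j k.

Definition epsC (b : vecC) : K := \sum_(i < n | (i : nat) == 0%N) b i.

(* Sweedler sum: F(b_(1), b_(2)) for F bilinear, with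
   Delta(x_i) = sum_(s+t=i) x_s (x) x_t *)
Definition sweed (b : vecC) (F : vecC -> vecC -> K) : K :=
  \sum_(i < n) b i * \sum_(s < i.+1) F (xb s) (xb (i - s)).

(* p : C (x) C -> C is a coalgebra morphism (C (x) C with tensor product
   coalgebra structure), written on the basis x_i (x) x_j:
   Delta (p (x_i (x) x_j)) = (p (x) p) (Delta_{C(x)C} (x_i (x) x_j)),
   eps (p (x_i (x) x_j)) = eps(x_i) eps(x_j). *)
Definition coalg_mor (p : lmap2) : Prop :=
  (forall (i j u v : 'I_n),
      cf p i j (u + v) =
      \sum_(a < i.+1) \sum_(c < j.+1) cf p a c u * cf p (i - a) (j - c) v)
  /\ (forall (i j : 'I_n),
      cf p i j 0%N = ((i : nat) == 0%N)%:R * ((j : nat) == 0%N)%:R).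

(* regular q-magma coalgebra: p, d coalgebra morphisms, and there are
   coalgebra morphisms up (a^b) and lo (a_b) with
   a^{b1}.b2 = (a.b1)^{b2} = eps(b) a  and  (a:b2)_{b1} = a_{b2}:b1 = eps(b) a *)
Definition regular_qmagma (p d : lmap2) : Prop :=
  coalg_mor p /\ coalg_mor d /\
  exists up lo : lmap2, coalg_mor up /\ coalg_mor lo /\
    forall (a b : vecC) (m : 'I_n),
      [/\ sweed b (fun b1 b2 => app p (app up a b1) b2 m) = epsC b * a m,
          sweed b (fun b1 b2 => app up (app p a b1) b2 m) = epsC b * a m,
          sweed b (fun b1 b2 => app lo (app d a b2) b1 m) = epsC b * a m
        & sweed b (fun b1 b2 => app d (app lo a b2) b1 m) = epsC b * a m].

Definition qcycle_coalg (p d : lmap2) : Prop :=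
  regular_qmagma p d /\
  forall (a b c : vecC) (m : 'I_n),
    [/\ sweed b (fun b1 b2 => app p (app p a b1) (app d c b2) m)
        = sweed c (fun c1 c2 => app p (app p a c2) (app p b c1) m),
        sweed b (fun b1 b2 => app d (app p a b1) (app p c b2) m)
        = sweed c (fun c1 c2 => app p (app d a c2) (app d b c1) m)
      & sweed b (fun b1 b2 => app d (app d a b1) (app d c b2) m)
        = sweed c (fun c1 c2 => app d (app d a c2) (app p b c1) m)].

Definition coord_conditions (p d : lmap2) : Prop :=
  forall (i j k : 'I_n),
  [/\ \sum_(a < j.+1) \sum_(h < i.+1) \sum_(l < k.+1)
        cf p i a h * cf d k (j - a) l * cf p h l 1%N
      = \sum_(c < k.+1) \sum_(h < i.+1) \sum_(l < j.+1)
        cf p i c h * cf p j (k - c) l * cf p h l 1%N,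
      \sum_(a < j.+1) \sum_(h < i.+1) \sum_(l < k.+1)
        cf p i a h * cf p k (j - a) l * cf d h l 1%N
      = \sum_(c < k.+1) \sum_(h < i.+1) \sum_(l < j.+1)
        cf d i c h * cf d j (k - c) l * cf p h l 1%N
    & \sum_(a < j.+1) \sum_(h < i.+1) \sum_(l < k.+1)
        cf d i a h * cf p k (j - a) l * cf d h l 1%N
      = \sum_(c < k.+1) \sum_(h < i.+1) \sum_(l < j.+1)
        cf d i c h * cf d j (k - c) l * cf d h l 1%N].

End QCycle.

(* Regularity gives (x_1^x_0) . x_0 = x_1, whence p_10^1 != 0, and likewise d_10^1 != 0.
   A coalgebra morphism P : C (x) C -> C is dual to the algebra map
   K[y]/(y^n) -> K[s,t]/(s^n,t^n) sending y to f = \sum p_ij^1 s^i t^j, and p_ij^h is the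
   coefficient of s^i t^j in f^h. As f^n = 0, p_10^1 != 0 and n != 0 in K, f contains no
   pure power of t: if beta t^m were the first one, the coefficient of s^(n-1) t^m in f^n
   would be n p_10^1^(n-1) beta. Hence s divides f and p_ij^h = 0 for h > i, which cuts the
   sums down to the ranges of the statement.
   By trilinearity the q-cycle identities compare coefficients of x_m. As functions of
   x_i (x) x_j (x) x_k both sides are coalgebra morphisms C (x) C (x) C -> C, and such a
   morphism is determined by its x_1-coefficients, which is what the conditions compare. *)

From mathcomp Require Import all_boot all_algebra ring zify.
Set Implicit Arguments. Unset Strict Implicit. Unset Printing Implicit Defensive.
Import GRing.Theory.
Local Open Scope ring_scope.

Section FiniteCoalgebras.
Variable R : comRingType.

(* A coalgebra with basis [X]: [Delta x = \sum_(x1, x2) comul x x1 x2 x1 (x) x2]. A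
   kernel [M : X -> Y -> R] stands for the linear map [x |-> \sum_y M x y y]. *)
Record coalg_data (X : finType) := CoalgData {
  comul : X -> X -> X -> R;
  counit : X -> R }.

Definition coalg_morph (X Y : finType) (A : coalg_data X) (B : coalg_data Y)
    (M : X -> Y -> R) : Prop :=
  (forall x y1 y2, \sum_y M x y * comul B y y1 y2
     = \sum_x1 \sum_x2 comul A x x1 x2 * (M x1 y1 * M x2 y2))
  /\ (forall x, \sum_y M x y * counit B y = counit A x).

Definition kmul (X Y Z : finType) (M : X -> Y -> R) (N : Y -> Z -> R) : X -> Z -> R :=
  fun x z => \sum_y M x y * N y z.

Definition ktensor (X X' Y Y' : finType) (M : X -> Y -> R) (N : X' -> Y' -> R) :
  (X * X')%type -> (Y * Y')%type -> R := fun x y => M x.1 y.1 * N x.2 y.2.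

Definition tensor_coalg (X X' : finType) (A : coalg_data X) (B : coalg_data X') :
    coalg_data (X * X')%type :=
  CoalgData (fun x x1 x2 => comul A x.1 x1.1 x2.1 * comul B x.2 x1.2 x2.2)
            (fun x => counit A x.1 * counit B x.2).

Lemma sum_mul_sum (I J : finType) (F : I -> R) (G : J -> R) :
  (\sum_i F i) * (\sum_j G j) = \sum_i \sum_j F i * G j.
Proof. by rewrite mulr_suml; under eq_bigr do rewrite mulr_sumr. Qed.

Lemma sum_pair (I J : finType) (F : (I * J)%type -> R) :
  \sum_p F p = \sum_i \sum_j F (i, j).
Proof. by rewrite pair_big; apply: eq_bigr => -[]. Qed.

Lemma mulr_sum2 (I J : finType) (a : R) (F : I -> J -> R) :
  a * \sum_i \sum_j F i j = \sum_i \sum_j a * F i j.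
Proof. by rewrite mulr_sumr; under eq_bigr do rewrite mulr_sumr. Qed.

Lemma sum2_mulr (I J : finType) (a : R) (F : I -> J -> R) :
  (\sum_i \sum_j F i j) * a = \sum_i \sum_j F i j * a.
Proof. by rewrite mulr_suml; under eq_bigr do rewrite mulr_suml. Qed.

Lemma exchange_big22 (I J I' J' : finType) (F : I -> J -> I' -> J' -> R) :
  \sum_i \sum_j \sum_i' \sum_j' F i j i' j' = \sum_i' \sum_j' \sum_i \sum_j F i j i' j'.
Proof.
under eq_bigr do rewrite exchange_big; rewrite exchange_big.
by apply: eq_bigr => i' _; under eq_bigr do rewrite exchange_big; rewrite exchange_big.
Qed.

Lemma sum_pick (I : finType) (i : I) (F : I -> R) : \sum_j (j == i)%:R * F j = F i.
Proof.
rewrite (bigD1 i) //= eqxx mul1r big1 ?addr0 // => j.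
by move/negbTE->; rewrite mul0r.
Qed.

Lemma coalg_morph_ext (X Y : finType) (A : coalg_data X) (B : coalg_data Y) M N :
  M =2 N -> coalg_morph A B M -> coalg_morph A B N.
Proof.
move=> eMN [MD Me]; split=> [x y1 y2|x].
  under eq_bigr do rewrite -eMN; rewrite MD.
  by apply: eq_bigr => x1 _; apply: eq_bigr => x2 _; rewrite !eMN.
by under eq_bigr do rewrite -eMN.
Qed.

Lemma kmul_morph (X Y Z : finType) (A : coalg_data X) (B : coalg_data Y)
    (C : coalg_data Z) M N :
  coalg_morph A B M -> coalg_morph B C N -> coalg_morph A C (kmul M N).
Proof.
move=> [MD Me] [ND Ne]; split=> [x z1 z2|x]; last first.
  rewrite -Me; under eq_bigr do rewrite mulr_suml.
  rewrite exchange_big; apply: eq_bigr => y _.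
  by rewrite -Ne mulr_sumr; apply: eq_bigr => z _; rewrite mulrA.
transitivity (\sum_y M x y * \sum_z N y z * comul C z z1 z2).
  under eq_bigr do rewrite mulr_suml; rewrite exchange_big.
  by apply: eq_bigr => y _; rewrite mulr_sumr; apply: eq_bigr => z _; rewrite mulrA.
under eq_bigr do rewrite ND mulr_sumr; rewrite exchange_big.
transitivity (\sum_y1 \sum_y2 (\sum_y M x y * comul B y y1 y2) * (N y1 z1 * N y2 z2)).
  apply: eq_bigr => y1 _; under eq_bigr do rewrite mulr_sumr; rewrite exchange_big.
  by apply: eq_bigr => y2 _; rewrite mulr_suml; apply: eq_bigr => y _; rewrite mulrA.
under eq_bigr do under eq_bigr do rewrite MD sum2_mulr.
rewrite exchange_big22; apply: eq_bigr => x1 _; apply: eq_bigr => x2 _.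
rewrite /kmul sum_mul_sum mulr_sum2.
by apply: eq_bigr => y1 _; apply: eq_bigr => y2 _; ring.
Qed.

Lemma ktensor_morph (X X' Y Y' : finType) (A : coalg_data X) (A' : coalg_data X')
    (B : coalg_data Y) (B' : coalg_data Y') M N :
  coalg_morph A B M -> coalg_morph A' B' N ->
  coalg_morph (tensor_coalg A A') (tensor_coalg B B') (ktensor M N).
Proof.
move=> [MD Me] [ND Ne]; split=> [[x x'] [y1 y1'] [y2 y2']|[x x']].
  transitivity ((\sum_y M x y * comul B y y1 y2) * (\sum_y' N x' y' * comul B' y' y1' y2')).
    rewrite sum_pair sum_mul_sum; apply: eq_bigr => y _; apply: eq_bigr => y' _.
    rewrite /ktensor /=; ring.
  rewrite MD ND sum_pair sum_mul_sum; apply: eq_bigr => x1 _; apply: eq_bigr => x1' _.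
  rewrite sum_pair sum_mul_sum; apply: eq_bigr => x2 _; apply: eq_bigr => x2' _.
  rewrite /ktensor /=; ring.
rewrite /= -Me -Ne sum_pair sum_mul_sum.
by apply: eq_bigr => y _; apply: eq_bigr => y' _; rewrite /ktensor /=; ring.
Qed.

Lemma coalg_morph_reindex (X Y : finType) (A : coalg_data X) (B : coalg_data Y)
    (f : X -> X) M :
  involutive f ->
  (forall x x1 x2, comul A (f x) (f x1) (f x2) = comul A x x1 x2) ->
  (forall x, counit A (f x) = counit A x) ->
  coalg_morph A B M -> coalg_morph A B (fun x => M (f x)).
Proof.
move=> fK fD fe [MD Me]; split=> [x y1 y2|x]; last by rewrite Me fe.
rewrite MD (reindex_inj (inv_inj fK)); apply: eq_bigr => x1 _.
by rewrite (reindex_inj (inv_inj fK)); apply: eq_bigr => x2 _; rewrite fD.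
Qed.

End FiniteCoalgebras.

Section CoalgebraC.
Variables (K : fieldType) (n : nat).
Implicit Types P Q R : lmap2 K n.

Lemma cf_ord P (i j k : 'I_n) : cf P i j k = P i j k.
Proof. by rewrite /cf !valK. Qed.

Lemma cf_out P i j k : (n <= i)%N || (n <= j)%N || (n <= k)%N -> cf P i j k = 0.
Proof.
rewrite /cf; case: insubP => [i' hi _|//]; case: insubP => [j' hj _|//].
by case: insubP => [k' hk _|//]; rewrite (leqNgt n i) (leqNgt n j) (leqNgt n k) hi hj hk.
Qed.

Lemma sum_ord_indicator (e : nat) (F : nat -> K) :
  \sum_(x < n) (e == x)%:R * F x = if (e < n)%N then F e else 0.
Proof.
case: ifP => [he|/negbT he].
  rewrite (bigD1 (Ordinal he)) //= eqxx mul1r big1 ?addr0 // => x.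
  by rewrite -val_eqE eq_sym => /negbTE /= ->; rewrite mul0r.
by apply: big1 => x _; case: eqP => [ex|_]; rewrite ?mul0r //; move: he; rewrite ex ltn_ord.
Qed.

Lemma sum_ord_antidiagonal (j : nat) (F : nat -> nat -> K) : (j < n)%N ->
  \sum_(a < n) \sum_(b < n) ((a + b)%N == j)%:R * F a b = \sum_(a < j.+1) F a (j - a)%N.
Proof.
move=> hj; rewrite (big_ord_widen n (fun a => F a (j - a)%N) hj) [RHS]big_mkcond /=.
apply: eq_bigr => a _; rewrite ltnS; case: leqP => [haj|hja].
  under eq_bigr => b _ do rewrite -{1}(subnKC haj) eqn_add2l eq_sym.
  by rewrite sum_ord_indicator (leq_ltn_trans (leq_subr a j) hj).
by apply: big1 => b _; rewrite eqn_leq (leqNgt _ j) (ltn_addr _ hja) mul0r.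
Qed.

Lemma sum_ord_trunc (i : nat) (F : nat -> K) : (i < n)%N ->
  (forall h, (i < h)%N -> F h = 0) -> \sum_(h < n) F h = \sum_(h < i.+1) F h.
Proof.
move=> hi hF; rewrite (big_ord_widen n F hi) [RHS]big_mkcond; apply: eq_bigr => h _.
by case: ltnP => // hh; apply: hF.
Qed.

Lemma sum_ord_dirac (F : 'I_n -> K) (m : 'I_n) (e : nat) :
  m = e :> nat -> \sum_h F h * (e == h)%:R = F m.
Proof.
move=> <-; rewrite (bigD1 m) //= eqxx mulr1 big1 ?addr0 // => h.
by rewrite val_eqE eq_sym => /negbTE ->; rewrite mulr0.
Qed.

Lemma sum_ord_indicator_add (u v j : nat) : (j < n)%N ->
  \sum_(a < n) \sum_(b < n) ((a + b)%N == j)%:R * ((u == a)%:R * (v == b)%:R)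
  = ((u + v)%N == j)%:R :> K.
Proof.
move=> hj.
transitivity (\sum_(a < n) (u == a)%:R * \sum_(b < n) (v == b)%:R * ((a + b)%N == j)%:R :> K).
  by apply: eq_bigr => a _; rewrite mulr_sumr; apply: eq_bigr => b _; ring.
under eq_bigr => a _ do rewrite (sum_ord_indicator v (fun b => ((a + b)%N == j)%:R)).
rewrite (sum_ord_indicator u (fun a => if (v < n)%N then ((a + v)%N == j)%:R else 0)).
by case: (ltnP u n) => hu; case: (ltnP v n) => hv //; case: eqP => // huv; lia.
Qed.

Definition coalgC : coalg_data K 'I_n :=
  CoalgData (fun h u v : 'I_n => ((u + v)%N == h)%:R) (fun h : 'I_n => (h == 0%N :> nat)%:R).

Local Notation I := 'I_n.
Local Notation C := coalgC.
Local Notation C2 := (tensor_coalg C C).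
Local Notation C3 := (tensor_coalg C2 C).
Local Notation C4 := (tensor_coalg C2 C2).

Definition lmap_kernel P : ('I_n * 'I_n)%type -> 'I_n -> K := fun x h => P x.1 x.2 h.

Lemma coalg_mor_morph P : coalg_mor P -> coalg_morph C2 C (lmap_kernel P).
Proof.
move=> [PD P0]; split=> [[i j] u v|[i j]]; rewrite /lmap_kernel /=; last first.
  under eq_bigr do rewrite -cf_ord mulrC eq_sym.
  by rewrite sum_ord_indicator (leq_ltn_trans (leq0n i)) ?P0.
transitivity (cf P i j (u + v)).
  under eq_bigr do rewrite -cf_ord mulrC.
  by rewrite sum_ord_indicator; case: ltnP => // huv; rewrite cf_out // huv !orbT.
rewrite PD [RHS]sum_pair; under [RHS]eq_bigr do under eq_bigr do rewrite sum_pair.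
under [RHS]eq_bigr do rewrite exchange_big.
rewrite -(sum_ord_antidiagonal
  (fun a a' => \sum_(c < j.+1) cf P a c u * cf P a' (j - c) v) (ltn_ord i)).
apply: eq_bigr => a _; apply: eq_bigr => a' _.
rewrite -(sum_ord_antidiagonal (fun c c' => cf P a c u * cf P a' c' v) (ltn_ord j)) mulr_sum2.
by apply: eq_bigr => c _; apply: eq_bigr => c' _; rewrite !cf_ord; ring.
Qed.

(* As M is a morphism, the x_(1+k)-coordinate of [M x] is computed from [Delta x] and the
   x_1- and x_k-coordinates of M: induct on k. *)
Lemma coalg_morph_to_C_eq (X : finType) (A : coalg_data K X) (M N : X -> I -> K) :
  coalg_morph A C M -> coalg_morph A C N ->
  (forall x (o : I), o = 1%N :> nat -> M x o = N x o) ->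
  forall x m, M x m = N x m.
Proof.
move=> [MD Me] [ND Ne] M1 x m.
suff: forall k y (m : I), m = k :> nat -> M y m = N y m by apply.
elim=> [|k IH] y {}m em.
  transitivity (counit A y); [rewrite -Me | rewrite -Ne];
    by under eq_bigr do rewrite /= eq_sym; rewrite (sum_ord_dirac _ em).
have hk : (k < n)%N by apply: ltnW; rewrite -em ltn_ord.
have h1 : (1 < n)%N by apply: leq_ltn_trans (ltn_ord m); rewrite em.
have := MD y (Ordinal h1) (Ordinal hk); have := ND y (Ordinal h1) (Ordinal hk).
rewrite /= add1n !(sum_ord_dirac _ em) => -> ->.
by apply: eq_bigr => x1 _; apply: eq_bigr => x2 _; rewrite M1 // (IH x2 (Ordinal hk)).
Qed.

(* [x_i (x) x_j (x) x_k |-> (x_i (x) x_j_(1)) (x) (x_k (x) x_j_(2))] *)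
Definition spread : (I * I * I)%type -> (I * I * (I * I))%type -> K :=
  fun x y => (y.1.1 == x.1.1)%:R * (y.2.1 == x.2)%:R * ((y.1.2 + y.2.2)%N == x.1.2)%:R.

Lemma sum_spread_r (i j k : I) (G : (I * I * (I * I))%type -> K) :
  \sum_y spread ((i, j), k) y * G y
  = \sum_(a < n) \sum_(b < n) ((a + b)%N == j)%:R * G ((i, a), (k, b)).
Proof.
transitivity (\sum_i' (i' == i)%:R * \sum_(a < n) \sum_k' (k' == k)%:R *
   \sum_(b < n) ((a + b)%N == j)%:R * G ((i', a), (k', b))).
  rewrite [LHS]sum_pair [LHS]sum_pair; apply: eq_bigr => i' _.
  rewrite mulr_sumr; apply: eq_bigr => a _; rewrite sum_pair mulr_sumr.
  apply: eq_bigr => k' _; rewrite !mulr_sumr; apply: eq_bigr => b _; rewrite /spread /=; ring.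
by rewrite sum_pick; apply: eq_bigr => a _; rewrite sum_pick.
Qed.

Lemma sum_spread_l (i a k b : I) (G : (I * I * I)%type -> K) :
  \sum_x spread x ((i, a), (k, b)) * G x = \sum_(j < n) ((a + b)%N == j)%:R * G ((i, j), k).
Proof.
transitivity (\sum_i' (i' == i)%:R * \sum_(j < n) \sum_k' (k' == k)%:R *
   (((a + b)%N == j)%:R * G ((i', j), k'))).
  rewrite [LHS]sum_pair [LHS]sum_pair; apply: eq_bigr => i' _.
  rewrite mulr_sumr; apply: eq_bigr => j _; rewrite mulr_sumr.
  by apply: eq_bigr => k' _; rewrite /spread /= ![(_ == i')]eq_sym ![(_ == k')]eq_sym; ring.
by rewrite sum_pick; apply: eq_bigr => j _; rewrite sum_pick.
Qed.

Lemma spread_morph : coalg_morph C3 C4 spread.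
Proof.
split=> [[[i j] k] [[i1 a1] [k1 b1]] [[i2 a2] [k2 b2]]|[[i j] k]]; rewrite sum_spread_r /=.
  transitivity (((i1 + i2)%N == i)%:R * ((k1 + k2)%N == k)%:R *
                ((a1 + a2 + (b1 + b2))%N == j)%:R : K).
    rewrite -(sum_ord_indicator_add _ _ (ltn_ord j)) mulr_sum2.
    by apply: eq_bigr => a _; apply: eq_bigr => b _; ring.
  symmetry; transitivity (\sum_x1 spread x1 ((i1, a1), (k1, b1)) *
     \sum_x2 spread x2 ((i2, a2), (k2, b2)) * comul C3 ((i, j), k) x1 x2).
    by apply: eq_bigr => x1 _; rewrite mulr_sumr; apply: eq_bigr => x2 _; rewrite /=; ring.
  rewrite sum_spread_l; under eq_bigr do rewrite sum_spread_l mulr_sumr.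
  rewrite addnACA -(sum_ord_indicator_add _ _ (ltn_ord j)) mulr_sum2.
  by apply: eq_bigr => j1 _; apply: eq_bigr => j2 _; rewrite /=; ring.
transitivity (((i : nat) == 0%N)%:R * ((k : nat) == 0%N)%:R * ((0 + 0)%N == j)%:R : K).
  rewrite -(sum_ord_indicator_add _ _ (ltn_ord j)) mulr_sum2.
  by apply: eq_bigr => a _; apply: eq_bigr => b _; rewrite ![(_ == 0%N)]eq_sym; ring.
by rewrite addn0 (eq_sym 0%N); ring.
Qed.

(* The coefficient of [x_m] in [R (P (x_i (x) x_j_(1)) (x) Q (x_k (x) x_j_(2)))]. *)
Definition sweed_coef P Q R (i j k m : nat) : K :=
  \sum_(a < j.+1) \sum_(h < n) \sum_(l < n) cf P i a h * cf Q k (j - a) l * cf R h l m.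

Lemma sweed_coefE P Q R (x : (I * I * I)%type) (m : I) :
  kmul spread (kmul (ktensor (lmap_kernel P) (lmap_kernel Q)) (lmap_kernel R)) x m
  = sweed_coef P Q R x.1.1 x.1.2 x.2 m.
Proof.
case: x => [[i j] k]; rewrite /kmul sum_spread_r /sweed_coef /=.
rewrite -(sum_ord_antidiagonal (fun a b =>
  \sum_(h < n) \sum_(l < n) cf P i a h * cf Q k b l * cf R h l m) (ltn_ord j)).
apply: eq_bigr => a _; apply: eq_bigr => b _; congr (_ * _); rewrite sum_pair.
by apply: eq_bigr => h _; apply: eq_bigr => l _; rewrite /ktensor /lmap_kernel !cf_ord.
Qed.

Lemma sweed_coef_morph P Q R : coalg_mor P -> coalg_mor Q -> coalg_mor R ->
  coalg_morph C3 C (fun x m => sweed_coef P Q R x.1.1 x.1.2 x.2 m).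
Proof.
move=> hP hQ hR; apply: coalg_morph_ext (sweed_coefE P Q R) _.
apply: kmul_morph spread_morph (kmul_morph _ (coalg_mor_morph hR)).
exact: ktensor_morph (coalg_mor_morph hP) (coalg_mor_morph hQ).
Qed.

Lemma sweed_coef_swap_morph P Q R : coalg_mor P -> coalg_mor Q -> coalg_mor R ->
  coalg_morph C3 C (fun x m => sweed_coef P Q R x.1.1 x.2 x.1.2 m).
Proof.
move=> hP hQ hR.
apply: (coalg_morph_reindex (f := fun x : I * I * I => (x.1.1, x.2, x.1.2)))
  (sweed_coef_morph hP hQ hR) => [[[]] //|[[? ?] ?] [[? ?] ?] [[? ?] ?]|[[? ?] ?]] /=; ring.
Qed.

Lemma sweed_coef_trunc P Q R (i j k m : nat) :
  (forall h i j, (i < h)%N -> cf P i j h = 0) -> (forall h i j, (i < h)%N -> cf Q i j h = 0) ->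
  (i < n)%N -> (k < n)%N ->
  sweed_coef P Q R i j k m = \sum_(a < j.+1) \sum_(h < i.+1) \sum_(l < k.+1)
                                cf P i a h * cf Q k (j - a) l * cf R h l m.
Proof.
move=> lP lQ hi hk; apply: eq_bigr => a _.
rewrite (@sum_ord_trunc _ (fun h => \sum_(l < n) cf P i a h * cf Q k (j - a) l * cf R h l m) hi);
  last by move=> h hh; apply: big1 => l _; rewrite lP // !mul0r.
apply: eq_bigr => h _.
apply: (@sum_ord_trunc _ (fun l => cf P i a h * cf Q k (j - a) l * cf R h l m) hk) => l hl.
by rewrite lQ // mulr0 mul0r.
Qed.

Lemma sweed_coef_swap_eq P Q R P' Q' R' :
  coalg_mor P -> coalg_mor Q -> coalg_mor R -> coalg_mor P' -> coalg_mor Q' -> coalg_mor R' ->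
  (forall i j k : I, sweed_coef P Q R i j k 1 = sweed_coef P' Q' R' i k j 1) ->
  forall i j k m : I, sweed_coef P Q R i j k m = sweed_coef P' Q' R' i k j m.
Proof.
move=> hP hQ hR hP' hQ' hR' e1 i j k.
apply: (coalg_morph_to_C_eq (sweed_coef_morph hP hQ hR) (sweed_coef_swap_morph hP' hQ' hR')
          _ ((i, j), k)).
by move=> [[i' j'] k'] o /= ->.
Qed.

End CoalgebraC.

Section CoalgMorCoefficients.
Variables (K : fieldType) (n : nat) (P : lmap2 K n).
Hypotheses (hP : coalg_mor P) (hn : (1 < n)%N).

Lemma cf_morD (i j u v : nat) : (i < n)%N -> (j < n)%N -> (u < n)%N -> (v < n)%N ->
  cf P i j (u + v) = \sum_(a < i.+1) \sum_(c < j.+1) cf P a c u * cf P (i - a) (j - c) v.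
Proof.
move=> hi hj hu hv; case: hP => PD _.
exact: (PD (Ordinal hi) (Ordinal hj) (Ordinal hu) (Ordinal hv)).
Qed.

Lemma cf_mor0 (i j : nat) : (i < n)%N -> (j < n)%N ->
  cf P i j 0 = (i == 0%N)%:R * (j == 0%N)%:R.
Proof. by move=> hi hj; case: hP => _ P0; exact: (P0 (Ordinal hi) (Ordinal hj)). Qed.

Lemma cf00_1_eq0 : cf P 0 0 1 = 0.
Proof.
have pw h : (h < n)%N -> cf P 0 0 h = cf P 0 0 1 ^+ h.
  elim: h => [|h IH] hh; first by rewrite cf_mor0 ?expr0 ?mulr1 //; lia.
  by rewrite -add1n cf_morD ?big_ord1 ?IH ?exprS //; lia.
have hn1 : (n.-1 < n)%N by lia.
have := cf_morD (ltnW hn) (ltnW hn) hn hn1.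
rewrite add1n prednK ?(ltnW hn) // cf_out ?leqnn ?orbT // !big_ord1 subnn pw //.
by rewrite -exprS prednK ?(ltnW hn) // => /esym/eqP; rewrite expf_eq0 => /andP[_ /eqP].
Qed.

Lemma cf_mor_weighted_eq0 (wa wb w0 : nat) :
  (forall a c, (a < n)%N -> (c < n)%N -> (a * wa + c * wb < w0)%N -> cf P a c 1 = 0) ->
  forall h i j, (i * wa + j * wb < h * w0)%N -> cf P i j h = 0.
Proof.
move=> hyp; elim=> [|v IH] i j hij; first by move: hij; rewrite mul0n.
case: (ltnP i n) => hi; last by rewrite cf_out // hi.
case: (ltnP j n) => hj; last by rewrite cf_out // hj orbT.
case: (ltnP v.+1 n) => hv; last by rewrite cf_out // hv !orbT.
case: v IH hij hv => [|v] IH hij hv; first by apply: hyp; rewrite // -(mul1n w0).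
rewrite -add1n cf_morD //; try lia.
apply: big1 => a _; apply: big1 => c _.
have ha : (a <= i)%N by rewrite -ltnS ltn_ord.
have hc : (c <= j)%N by rewrite -ltnS ltn_ord.
case: (ltnP (a * wa + c * wb) w0) => hw; first by rewrite hyp ?mul0r //; lia.
rewrite IH ?mulr0 //; move: hij; rewrite mulSn.
have e1 : ((i - a) * wa + a * wa = i * wa)%N by rewrite -mulnDl subnK.
have e2 : ((j - c) * wb + c * wb = j * wb)%N by rewrite -mulnDl subnK.
lia.
Qed.

Lemma cf_mor_deg_eq0 h i j : (i + j < h)%N -> cf P i j h = 0.
Proof.
move=> hij; apply: (@cf_mor_weighted_eq0 1 1 1) => [a c _ _|]; last by rewrite !muln1.
by rewrite !muln1 ltnS leqn0 addn_eq0 => /andP[/eqP-> /eqP->]; exact: cf00_1_eq0.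
Qed.

Lemma cf_mor_diag v : (v < n)%N -> cf P v 0 v = cf P 1 0 1 ^+ v.
Proof.
elim: v => [|v IH] hv; first by rewrite cf_mor0 ?mulr1 //; lia.
have := @cf_morD v.+1 0 1 v hv ltac:(lia) hn ltac:(lia); rewrite add1n => ->.
under eq_bigr do rewrite big_ord1.
rewrite big_ord_recl big_ord_recl cf00_1_eq0 mul0r add0r.
rewrite big1 ?addr0 => [|a _]; last first.
  by rewrite (cf_mor_deg_eq0 (h := v)) ?mulr0 // !lift0; have := ltn_ord a; lia.
by rewrite !lift0 subSS !subn0 IH ?exprS //; lia.
Qed.

Lemma sum_cf_mor10 (G : 'I_n -> K) : \sum_(i < n) cf P 1 0 i * G i = cf P 1 0 1 * G (Ordinal hn).
Proof.
rewrite (bigD1 (Ordinal hn)) //= big1 ?addr0 // => i; rewrite -val_eqE /= => hi.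
have [->|i0] := posnP i; first by rewrite cf_mor0 ?mul0r //; lia.
by rewrite cf_mor_deg_eq0 ?mul0r //; lia.
Qed.

Section LeadingCoefficient.
Hypotheses (hn0 : n%:R != 0 :> K) (hP1 : cf P 1 0 1 != 0).
Local Notation alpha := (cf P 1 0 1).

(* Weighting s by m and t by 1, the lowest-weight part of f is alpha s + beta t^m. *)
Section FirstPureCoefficient.
Variable m : nat.
Hypotheses (hm0 : (0 < m)%N) (hm : (m < n)%N) (hlt : forall c, (c < m)%N -> cf P 0 c 1 = 0).
Local Notation beta := (cf P 0 m 1).

Lemma cf_mor_weight_m1_eq0 h i j : (i * m + j < h * m)%N -> cf P i j h = 0.
Proof.
move=> hij; apply: (@cf_mor_weighted_eq0 m 1 m) => [a c _ _ hw|]; last by rewrite muln1.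
rewrite muln1 in hw; have -> : a = 0%N by nia.
by apply: hlt; nia.
Qed.

Lemma cf_mor_mixed_step v : (0 < v < n)%N -> cf P v.-1 m v = v%:R * alpha ^+ v.-1 * beta ->
  \sum_(a < v.+1) \sum_(c < m.+1) cf P a c 1 * cf P (v - a) (m - c) v
  = v.+1%:R * alpha ^+ v * beta.
Proof.
case: v => [//|v] /andP[_ hv] e.
rewrite big_ord_recl big_ord_recl big_ord_recr big_ord_recl.
rewrite big1 => [|c _]; last by rewrite hlt ?mul0r //=; exact: ltn_ord.
rewrite big1 => [|c _]; last by rewrite (cf_mor_weight_m1_eq0 (h := v.+1)) ?mulr0 // !lift0 /=; nia.
rewrite big1 => [|a _]; last first.
  apply: big1 => c _; rewrite (cf_mor_weight_m1_eq0 (h := v.+1)) ?mulr0 // !lift0 /=.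
  by have := ltn_ord a; nia.
rewrite subn0 !lift0 subnn subn0 subSS subn0 e cf_mor_diag //= exprS -[v.+2%:R]natr1.
ring.
Qed.

Lemma cf_mor_mixed v : (0 < v < n)%N -> cf P v.-1 m v = v%:R * alpha ^+ v.-1 * beta.
Proof.
elim: v => [//|v IH] /andP[_ hv].
case: v IH hv => [_ _|v IH hv]; first by rewrite /= expr0 !mul1r.
have := @cf_morD v.+1 m 1 v.+1 ltac:(lia) hm hn ltac:(lia); rewrite add1n => ->.
by apply: cf_mor_mixed_step; rewrite ?IH //; lia.
Qed.

Lemma cf0m1_eq0 : beta = 0.
Proof.
have hn1 : (0 < n.-1 < n)%N by lia.
have := @cf_morD n.-1 m 1 n.-1 ltac:(lia) hm hn ltac:(lia).
rewrite cf_mor_mixed_step ?cf_mor_mixed // add1n prednK; last lia.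
rewrite [cf P _ _ n]cf_out ?leqnn ?orbT //.
move/esym/eqP; rewrite !mulf_eq0 expf_eq0 (negbTE hn0) (negbTE hP1) andbF /=.
by move/eqP.
Qed.

End FirstPureCoefficient.

Lemma cf_mor_pure_eq0 c : (c < n)%N -> cf P 0 c 1 = 0.
Proof.
elim/ltn_ind: c => -[_ _|m IH hm]; first exact: cf00_1_eq0.
by apply: cf0m1_eq0 => // c hc; apply: IH => //; lia.
Qed.

Lemma cf_mor_lt_eq0 h i j : (i < h)%N -> cf P i j h = 0.
Proof.
move=> hih; apply: (@cf_mor_weighted_eq0 1 0 1) => [a c _ hc|]; last by rewrite !muln1 muln0 addn0.
by rewrite muln1 muln0 addn0 ltnS leqn0 => /eqP->; exact: cf_mor_pure_eq0.
Qed.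
End LeadingCoefficient.

End CoalgMorCoefficients.

Section SweedlerExpansion.
Variables (K : fieldType) (n : nat).
Implicit Types (P Q R : lmap2 K n) (a b c : vecC K n).
Local Notation xb := (@xb K n).

Lemma app_xb_r P a (s : nat) (h : 'I_n) : app P a (xb s) h = \sum_i a i * cf P i s h.
Proof.
rewrite /app; apply: eq_bigr => i _.
transitivity (\sum_(j < n) (s == j)%:R * (a i * cf P i j h)).
  by apply: eq_bigr => j _; rewrite cf_ord /xb eq_sym; ring.
rewrite (sum_ord_indicator _ _ (fun j => a i * cf P i j h)); case: ltnP => // hs.
by rewrite cf_out ?mulr0 // hs orbT.
Qed.

Lemma sum_xb (s : 'I_n) (F : 'I_n -> K) : \sum_i xb s i * F i = F s.
Proof. by under eq_bigr do rewrite /xb val_eqE; rewrite sum_pick. Qed.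

Lemma app_xb2 P (s t : nat) (h : 'I_n) : app P (xb s) (xb t) h = cf P s t h.
Proof.
rewrite app_xb_r; under eq_bigr do rewrite /xb eq_sym.
rewrite (sum_ord_indicator _ _ (fun i => cf P i t h)).
by case: ltnP => // hs; rewrite cf_out // hs.
Qed.

Lemma sweedC b F : sweed b F = sweed b (fun b1 b2 => F b2 b1).
Proof.
apply: eq_bigr => i _; congr (_ * _); rewrite (reindex_inj rev_ord_inj) /=.
by apply: eq_bigr => s _; rewrite subSS subKn // -ltnS.
Qed.

Lemma sweed_appE P Q R a b c (m : 'I_n) :
  sweed b (fun b1 b2 => app R (app P a b1) (app Q c b2) m)
  = \sum_i \sum_j \sum_k a i * b j * c k * sweed_coef P Q R i j k m.
Proof.
rewrite [RHS]exchange_big /=; apply: eq_bigr => j _.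
transitivity (\sum_(s < j.+1) \sum_(h < n) \sum_(l < n) \sum_(i < n) \sum_(k < n)
                a i * b j * c k * (cf P i s h * cf Q k (j - s) l * cf R h l m)).
  rewrite mulr_sumr; apply: eq_bigr => s _; rewrite mulr_sum2.
  apply: eq_bigr => h _; apply: eq_bigr => l _.
  rewrite !app_xb_r sum_mul_sum sum2_mulr mulr_sum2 cf_ord.
  by apply: eq_bigr => i _; apply: eq_bigr => k _; ring.
under [LHS]eq_bigr do rewrite exchange_big22.
rewrite exchange_big; apply: eq_bigr => i _; rewrite exchange_big; apply: eq_bigr => k _.
by rewrite /sweed_coef mulr_sumr; apply: eq_bigr => s _; rewrite mulr_sum2.
Qed.

Lemma sweed_appE_swap P Q R a b c (m : 'I_n) :
  sweed c (fun c1 c2 => app R (app P a c2) (app Q b c1) m)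
  = \sum_i \sum_j \sum_k a i * b j * c k * sweed_coef P Q R i k j m.
Proof.
rewrite sweedC sweed_appE; apply: eq_bigr => i _; rewrite exchange_big.
by apply: eq_bigr => j _; apply: eq_bigr => k _; ring.
Qed.

Lemma sum3_xb (i j k : 'I_n) (F : 'I_n -> 'I_n -> 'I_n -> K) :
  \sum_i' \sum_j' \sum_k' xb i i' * xb j j' * xb k k' * F i' j' k' = F i j k.
Proof.
transitivity (\sum_i' xb i i' * \sum_j' xb j j' * \sum_k' xb k k' * F i' j' k').
  apply: eq_bigr => i' _; rewrite mulr_sumr; apply: eq_bigr => j' _.
  by rewrite mulr_sumr mulr_sumr; apply: eq_bigr => k' _; ring.
by rewrite sum_xb sum_xb sum_xb.
Qed.

Lemma sweed_xb0 (F : vecC K n -> vecC K n -> K) : (0 < n)%N -> sweed (xb 0) F = F (xb 0) (xb 0).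
Proof.
move=> n0; rewrite /sweed; under eq_bigr do rewrite /xb eq_sym.
by rewrite (sum_ord_indicator _ _ (fun i => \sum_(s < i.+1) F (xb s) (xb (i - s)))) n0 big_ord1.
Qed.

Lemma epsC_xb0 : (0 < n)%N -> epsC (xb 0) = 1.
Proof. by move=> n0; rewrite /epsC (big_pred1 (Ordinal n0)) // => i; rewrite /= -val_eqE. Qed.

Lemma app_app_xb P Q (s t u : nat) (h : 'I_n) :
  app P (app Q (xb s) (xb t)) (xb u) h = \sum_(i < n) cf Q s t i * cf P i u h.
Proof. by rewrite app_xb_r; apply: eq_bigr => i _; rewrite app_xb2. Qed.

End SweedlerExpansion.

Section CycleConditions.
Variables (K : fieldType) (n : nat).
Implicit Types p d P Q R : lmap2 K n.
Local Notation xb := (@xb K n).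

Definition coef_identities p d (m : nat) : Prop :=
  forall i j k : 'I_n,
  [/\ sweed_coef p d p i j k m = sweed_coef p p p i k j m,
      sweed_coef p p d i j k m = sweed_coef d d p i k j m
    & sweed_coef d d d i j k m = sweed_coef d p d i k j m].

Lemma qcycle_coalg_coef p d :
  qcycle_coalg p d <-> regular_qmagma p d /\ forall m : 'I_n, coef_identities p d m.
Proof.
split=> -[hreg H]; split=> //; last first.
  move=> a b c m; rewrite !sweed_appE !sweed_appE_swap.
  split; apply: eq_bigr => i _; apply: eq_bigr => j _; apply: eq_bigr => k _;
    by have [e1 e2 e3] := H m i j k; rewrite ?e1 ?e2 ?e3.
move=> m i j k.
have E P Q R P' Q' R' :
    (forall a b c, sweed b (fun b1 b2 => app R (app P a b1) (app Q c b2) m)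
                 = sweed c (fun c1 c2 => app R' (app P' a c2) (app Q' b c1) m)) ->
    sweed_coef P Q R i j k m = sweed_coef P' Q' R' i k j m.
  move=> eH; rewrite -(sum3_xb i j k (fun i j k => sweed_coef P Q R i j k m)).
  rewrite -(sum3_xb i j k (fun i j k => sweed_coef P' Q' R' i k j m)).
  by rewrite -sweed_appE eH sweed_appE_swap.
by split; apply: E => a b c; case: (H a b c m).
Qed.

Lemma coord_conditions_coef p d :
  (forall h i j, (i < h)%N -> cf p i j h = 0) -> (forall h i j, (i < h)%N -> cf d i j h = 0) ->
  coord_conditions p d <-> coef_identities p d 1.
Proof.
move=> lp ld; split=> H i j k; have [e1 e2 _] := H i j k; have [_ _ e3] := H i k j.
  by rewrite !sweed_coef_trunc.
by rewrite !sweed_coef_trunc // in e1 e2 e3.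
Qed.

Lemma regular_qmagma_cf101 p d : (1 < n)%N -> regular_qmagma p d ->
  cf p 1 0 1 != 0 /\ cf d 1 0 1 != 0.
Proof.
move=> hn [_ [hd [up [lo [hup [_ H]]]]]].
have [E1 _ E3 _] := H (xb 1) (xb 0) (Ordinal hn).
rewrite !sweed_xb0 ?epsC_xb0 ?(ltnW hn) // mul1r !app_app_xb !sum_cf_mor10 // /xb /= in E1 E3.
by split; apply/eqP => e; [move: E1 | move: E3];
  rewrite e ?(mulr0, mul0r) => /eqP; rewrite eq_sym oner_eq0.
Qed.

End CycleConditions.

Theorem proposition2p1 (K : closedFieldType) (hK : [pchar K] =i pred0)
  (n : nat) (hn : (2 <= n)%N) (p d : lmap2 K n) :
  regular_qmagma p d -> (qcycle_coalg p d <-> coord_conditions p d).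
Proof.
move=> hreg; have [hp [hd _]] := hreg.
have hn0 : n%:R != 0 :> K by move/pcharf0P: hK => ->; rewrite -lt0n ltnW.
have [hp1 hd1] := regular_qmagma_cf101 hn hreg.
rewrite qcycle_coalg_coef (coord_conditions_coef (cf_mor_lt_eq0 hp hn hn0 hp1)
                                                 (cf_mor_lt_eq0 hd hn hn0 hd1)).
split=> [[_ H]|H]; first exact: H (Ordinal hn).
split=> // m i j k.
by split; apply: sweed_coef_swap_eq => // i' j' k'; case: (H i' j' k').
Qed.
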